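(* Let $G$ be a connected graph with $n\ge 13$ vertices and maximum degree $\Delta=\Delta(G)$. Suppose one of the following holds: (1) $n/2\le \Delta\le n-4$ and $e(G)=n+k$ for some $1\le k\le 10$; (2) $\Delta=n-3$ and $e(G)=n+k$ for some $1\le k\le 7$; (3) $\Delta=n-2$ and $e(G)=n+k$ for some $1\le k\le 4$. Then $\frac{q(G)}{R(G)}<\frac{n}{\sqrt{n-1}}$.
   Context: All graphs are finite and simple; $e(G)$ is the number of edges and $\Delta(G)$ the maximum degree. For a vertex $u$, $d(u)$ is its degree. The Randić index is $R(G)=\sum_{\{u,v\}\in E(G)} \frac{1}{\sqrt{d(u)d(v)}}$. The signless Laplacian is $Q=D+A$ ($D$ the diagonal degree matrix, $A$ the adjacency matrix), and $q(G)$ is its largest eigenvalue. *)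

From HB Require Import structures.
From mathcomp Require Import all_boot all_order all_algebra.
Set Implicit Arguments. Unset Strict Implicit. Unset Printing Implicit Defensive.
Import Order.TTheory GRing.Theory Num.Theory.

Definition simple_graph (n : nat) (g : rel 'I_n) : Prop :=
  symmetric g /\ irreflexive g.

Definition gconnected (n : nat) (g : rel 'I_n) : Prop :=
  forall u v : 'I_n, connect g u v.

Definition deg (n : nat) (g : rel 'I_n) (u : 'I_n) : nat := #|[set v | g u v]|.

Definition maxdeg (n : nat) (g : rel 'I_n) : nat := (\max_(u : 'I_n) deg g u)%N.

Definition edges (n : nat) (g : rel 'I_n) : {set {set 'I_n}} :=
  [set A : {set 'I_n} | [exists u, exists v, g u v && (A == [set u; v])]].

Definition nedges (n : nat) (g : rel 'I_n) : nat := #|edges g|.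

Local Open Scope ring_scope.

(* Randic index: sum over unordered edges = half the sum over ordered adjacent pairs *)
Definition randic (R : rcfType) (n : nat) (g : rel 'I_n) : R :=
  2^-1 * \sum_(u : 'I_n) \sum_(v : 'I_n | g u v)
           (Num.sqrt ((deg g u)%:R * (deg g v)%:R))^-1.

Definition signless_laplacian (R : rcfType) (n : nat) (g : rel 'I_n) : 'M[R]_n :=
  \matrix_(i, j) ((if i == j then (deg g i)%:R else 0) + (g i j)%:R).

Definition is_q (R : rcfType) (n : nat) (g : rel 'I_n) (q : R) : Prop :=
  eigenvalue (signless_laplacian R g) q /\
  forall l : R, eigenvalue (signless_laplacian R g) l -> l <= q.

(* An eigenvector v of Q = D + A, evaluated at a vertex j maximising
   |v_i| / d_i, gives (q - d_j) d_j <= sum_{i ~ j} d_i.  That neighbour sum is at most both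
   d_j Delta and 2 e(G) - (n - 1), and each case of the hypothesis makes the latter at most
   (n - Delta) Delta; either way it is at most d_j (n - d_j), so q <= n.  On the other side, comparing every degree
   with Delta yields 2 R(G) sqrt Delta >= (n - 1) + Delta, which exceeds 2 sqrt((n-1) Delta)
   as Delta < n - 1; hence R(G) > sqrt (n - 1). *)
From HB Require Import structures.
From mathcomp Require Import all_boot all_order all_algebra.
From mathcomp Require Import zify ring lra.

Set Implicit Arguments.
Unset Strict Implicit.
Unset Printing Implicit Defensive.

Import Order.TTheory GRing.Theory Num.Theory.

Lemma sqrn_add_leq_muln (n D d S : nat) :
  d <= D <= n -> S <= d * D -> S <= (n - D) * D -> d * d + S <= n * d.
Proof.
move=> /andP[dD Dn] SdD SsD.
have [dsD | sDd] := leqP d (n - D); first nia.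
(* d lies between n - D and D, where x (n - x) >= (n - D) D *)
have : 0 <= (d - (n - D)) * (D - d) by [].
nia.
Qed.

Lemma lemma3p5_edge_bound (n D m : nat) : 13 <= n ->
  [\/ n <= 2 * D /\ D <= n - 4 /\ exists k, 1 <= k <= 10 /\ m = n + k,
      D = n - 3 /\ exists k, 1 <= k <= 7 /\ m = n + k
    | D = n - 2 /\ exists k, 1 <= k <= 4 /\ m = n + k] ->
  D <= n - 2 /\ 2 * m <= (n - D) * D + n.-1.
Proof. by move=> n13 [[? [? [k [? ->]]]] | [-> [k [? ->]]] | [-> [k [? ->]]]]; nia. Qed.

Section Degrees.
Variables (n : nat) (g : rel 'I_n).

Lemma deg_sum1 u : deg g u = \sum_(v | g u v) 1.
Proof. by rewrite /deg sum1_card cardsE. Qed.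

Lemma deg_le_maxdeg u : deg g u <= maxdeg g.
Proof. exact: leq_bigmax. Qed.

Lemma maxdeg_le_order : maxdeg g <= n.
Proof. by apply/bigmax_leqP => u _; rewrite /deg -[leqRHS]card_ord max_card. Qed.

Lemma gconnected_deg_gt0 : gconnected g -> 1 < n -> forall u, 0 < deg g u.
Proof.
move=> gconn n_gt1 u.
have other_lt_n : (if val u == 0 then 1 else 0) < n by case: (val u == 0); lia.
case/connectP: (gconn u (Ordinal other_lt_n)) => -[|x p] /=.
- by move=> _ /(congr1 val) /=; case: eqP => [->|] //; lia.
- by move=> /andP[gux _] _; apply/card_gt0P; exists x; rewrite inE.
Qed.

Hypothesis girr : irreflexive g.

Lemma sum_deg_le_2nedges : \sum_u deg g u <= 2 * nedges g.
Proof.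
pose P := [set p : 'I_n * 'I_n | g p.1 p.2].
have -> : \sum_u deg g u = #|P|.
  rewrite -sum1_card (partition_big (fun p : 'I_n * 'I_n => p.1) predT) //=.
  apply: eq_bigr => u _; rewrite deg_sum1.
  rewrite (reindex (fun v => (u, v))) /=; last first.
    by exists (fun p : 'I_n * 'I_n => p.2) => //= [[a b]] /andP[_ /eqP /= ->].
  by apply: eq_bigl => v; rewrite inE /= eqxx andbT.
(* an ordered adjacent pair is determined by its edge and the orientation bit *)
pose f (p : 'I_n * 'I_n) := ([set p.1; p.2], p.1 < p.2).
have f_inj : {in P &, injective f}.
  move=> [a b] [c d]; rewrite !inE /= => gab gcd [] Eab Elt.
  have ab : a != b by apply: contraTneq gab => ->; rewrite girr.
  have cd : c != d by apply: contraTneq gcd => ->; rewrite girr.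
  have : a \in [set c; d] by rewrite -Eab !inE eqxx.
  have : b \in [set c; d] by rewrite -Eab !inE eqxx orbT.
  rewrite !inE => /orP[] /eqP Hb /orP[] /eqP Ha; subst; rewrite ?eqxx in ab cd => //.
  by move: Elt cd; case: (ltngtP d c) => // /val_inj ->; rewrite eqxx.
rewrite -(card_in_imset f_inj).
have fP_sub : f @: P \subset setX (edges g) [set: bool].
  apply/subsetP => _ /imsetP[[a b] Pab ->]; rewrite !inE /= andbT.
  apply/existsP; exists a; apply/existsP; exists b.
  by move: Pab; rewrite inE /= => ->; rewrite eqxx.
by rewrite (leq_trans (subset_leq_card fP_sub)) // cardsX cardsT card_bool mulnC.
Qed.

Hypothesis deg_gt0 : forall u, 0 < deg g u.

Lemma sum_neighbour_deg_add_le j :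
  \sum_(i | g j i) deg g i + n.-1 <= \sum_i deg g i.
Proof.
have n_split : n = deg g j + (1 + \sum_(i | ~~ g j i && (i != j)) 1).
  by rewrite -{1}(card_ord n) -sum1_card (bigID (g j)) /= -deg_sum1 (bigD1 j) ?girr.
have far_le : \sum_(i | ~~ g j i && (i != j)) 1 <= \sum_(i | ~~ g j i && (i != j)) deg g i.
  by apply: leq_sum => i _; apply: deg_gt0.
have non_nb : \sum_(i | ~~ g j i) deg g i
    = deg g j + \sum_(i | ~~ g j i && (i != j)) deg g i by rewrite (bigD1 j) ?girr.
rewrite [leqRHS](bigID (g j)) /= non_nb.
lia.
Qed.

Lemma sum_neighbour_deg_le_maxdeg j : \sum_(i | g j i) deg g i <= deg g j * maxdeg g.
Proof.
rewrite mulnC (deg_sum1 j) big_distrr /= muln1.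
by apply: leq_sum => i _; apply: deg_le_maxdeg.
Qed.

End Degrees.

Local Open Scope ring_scope.

Section SignlessLaplacian.
Variables (R : rcfType) (n : nat) (g : rel 'I_n).
Hypotheses (gsym : symmetric g) (girr : irreflexive g).
Hypothesis deg_gt0 : forall u, (0 < deg g u)%N.

Lemma signless_laplacian_rowE (v : 'rV[R]_n) j :
  (v *m signless_laplacian R g) 0 j = (deg g j)%:R * v 0 j + \sum_(i | g j i) v 0 i.
Proof.
rewrite !mxE; under eq_bigr => i _ do rewrite mxE mulrDr.
rewrite big_split /= (bigD1 j) //= eqxx big1 => [|i /negbTE ->]; last by rewrite mulr0.
rewrite addr0 mulrC; congr (_ + _).
rewrite [RHS]big_mkcond /=; apply: eq_bigr => i _.
by rewrite gsym; case: (g j i); rewrite ?mulr1 ?mulr0.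
Qed.

Lemma eigenvalue_signless_laplacian_bound q :
  eigenvalue (signless_laplacian R g) q ->
  exists j, (q - (deg g j)%:R) * (deg g j)%:R <= \sum_(i | g j i) (deg g i)%:R.
Proof.
case/eigenvalueP => v vQ /rV0Pn [i0 vi0].
have dpos i : 0 < (deg g i)%:R :> R by rewrite ltr0n.
pose F i := `|v 0 i| / (deg g i)%:R.
pose j := [arg max_(i > i0) F i]%O.
have Fj i : F i <= F j.
  by rewrite /j; case: (arg_maxP F (erefl true : predT i0)) => k _ /(_ i isT).
have vj_gt0 : 0 < `|v 0 j|.
  have : 0 < F j by rewrite (lt_le_trans _ (Fj i0)) // divr_gt0 ?normr_gt0.
  by rewrite pmulr_lgt0 // invr_gt0.
exists j.
have eigen_j : (q - (deg g j)%:R) * v 0 j = \sum_(i | g j i) v 0 i.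
  move/matrixP: vQ => /(_ 0 j); rewrite signless_laplacian_rowE !mxE.
  by move=> vQj; rewrite mulrBl -vQj addrC addKr.
have : (q - (deg g j)%:R) * `|v 0 j| <= F j * \sum_(i | g j i) (deg g i)%:R.
  apply: (le_trans (ler_norm _)).
  rewrite normrM normr_id -normrM eigen_j.
  apply: (le_trans (ler_norm_sum _ _ _)).
  rewrite mulr_sumr; apply: ler_sum => i _.
  by rewrite -ler_pdivrMr ?dpos ?Fj.
by rewrite /F [leLHS]mulrC mulrAC -mulrA ler_pM2l // ler_pdivlMr.
Qed.

Lemma eigenvalue_signless_laplacian_le_order q :
  (2 * nedges g <= (n - maxdeg g) * maxdeg g + n.-1)%N ->
  eigenvalue (signless_laplacian R g) q -> q <= n%:R.
Proof.
move=> edge_bound /eigenvalue_signless_laplacian_bound [j].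
rewrite -natr_sum; set d := deg g j => le_qd.
have d_gt0 : (0 < d)%N := deg_gt0 j.
have le_dD : (d <= maxdeg g <= n)%N.
  by rewrite deg_le_maxdeg maxdeg_le_order.
have sum_nb := sum_neighbour_deg_add_le girr deg_gt0 j.
have sum_deg := sum_deg_le_2nedges girr.
have key : (d * d + \sum_(i | g j i) deg g i <= n * d)%N.
  by apply: sqrn_add_leq_muln le_dD (sum_neighbour_deg_le_maxdeg g j) _; lia.
have : (q - d%:R) * d%:R <= (n * d - d * d)%:R :> R.
  by apply: (le_trans le_qd); rewrite ler_nat; lia.
rewrite natrB ?natrM; last by nia.
have : 0 < d%:R :> R by rewrite ltr0n.
nra.
Qed.

End SignlessLaplacian.

Section Randic.
Variables (R : rcfType) (n : nat) (g : rel 'I_n).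
Hypothesis girr : irreflexive g.
Hypothesis deg_gt0 : forall u, (0 < deg g u)%N.

Lemma sumr_neighbour_const (V : nmodType) u (c : V) : \sum_(v | g u v) c = c *+ deg g u.
Proof. by rewrite sumr_const /deg cardsE. Qed.

Lemma natr_deg_sum u : (deg g u)%:R = \sum_v (g u v : nat)%:R :> R.
Proof.
rewrite /deg -sum1_card natr_sum big_mkcond /=; apply: eq_bigr => v _.
by rewrite inE; case: (g u v).
Qed.

Lemma natr_div_sqrt (d : nat) : d%:R / Num.sqrt d%:R = Num.sqrt d%:R :> R.
Proof.
have [-> | d_neq0] := eqVneq d 0%N; first by rewrite sqrtr0 mul0r.
by rewrite -{1}[d%:R]sqr_sqrtr ?ler0n // expr2 mulfK // gt_eqF // sqrtr_gt0 ltr0n lt0n.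
Qed.

Lemma one_add_le_sqrt_add (d : nat) (b : bool) : (0 < d)%N ->
  1 + (b : nat)%:R <= Num.sqrt (d%:R : R) + (b : nat)%:R / Num.sqrt d%:R.
Proof.
move=> d_gt0.
have s1 : 1 <= Num.sqrt (d%:R : R).
  by rewrite -[leLHS]sqrtr1 ler_sqrt ?ler0n // ler1n.
case: b => /=; last by rewrite mul0r !addr0.
have : 2 - Num.sqrt (d%:R : R) <= 1 / Num.sqrt d%:R by rewrite ler_pdivlMr; nra.
rewrite mul1r; lra.
Qed.

Lemma randic_lower_bound w : deg g w = maxdeg g ->
  (n.-1)%:R + (maxdeg g)%:R <= 2 * randic R g * Num.sqrt (maxdeg g)%:R.
Proof.
move=> Dw; rewrite -Dw; set D := (deg g w)%:R : R.
have sqrt_gt0 u : 0 < Num.sqrt (deg g u)%:R :> R by rewrite sqrtr_gt0 ltr0n.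
rewrite /randic mulrA mulfV ?pnatr_eq0 // mul1r mulr_suml (bigD1 w) //=.
have term_w : (\sum_(v | g w v) (Num.sqrt (D * (deg g v)%:R))^-1) * Num.sqrt D
    = \sum_(v | g w v) (Num.sqrt (deg g v)%:R)^-1.
  rewrite mulr_suml; apply: eq_bigr => v _.
  by rewrite sqrtrM ?ler0n // invfM mulrAC mulVf ?mul1r // gt_eqF // (sqrt_gt0 w).
have term_u u : Num.sqrt (deg g u)%:R <=
    (\sum_(v | g u v) (Num.sqrt ((deg g u)%:R * (deg g v)%:R))^-1) * Num.sqrt D.
  have -> : Num.sqrt (deg g u)%:R = (deg g u)%:R / Num.sqrt ((deg g u)%:R * D) * Num.sqrt D.
    by rewrite sqrtrM ?ler0n // invfM mulrA mulfVK ?natr_div_sqrt // gt_eqF // (sqrt_gt0 w).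
  rewrite ler_pM2r ?(sqrt_gt0 w) // mulr_natl -sumr_neighbour_const.
  apply: ler_sum => v _.
  rewrite lef_pV2 ?posrE ?sqrtr_gt0 ?mulr_gt0 ?ltr0n //.
  by rewrite ler_sqrt ?mulr_ge0 ?ler0n // ler_pM2l ?ltr0n // ler_nat Dw deg_le_maxdeg.
rewrite term_w.
apply: (@le_trans _ _ (\sum_(v | g w v) (Num.sqrt (deg g v)%:R)^-1
                       + \sum_(u | u != w) Num.sqrt (deg g u)%:R)); last first.
  by rewrite lerD2l; apply: ler_sum => u _; apply: term_u.
have -> : \sum_(v | g w v) (Num.sqrt (deg g v)%:R)^-1
    = \sum_(v | v != w) (g w v : nat)%:R / Num.sqrt (deg g v)%:R :> R.
  rewrite big_mkcond [RHS]big_mkcond (bigD1 w) //= girr add0r [RHS](bigD1 w) //= eqxx add0r.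
  apply: eq_bigr => v _; case: eqP => [->|_]; first by rewrite girr.
  by case: (g w v) => /=; rewrite ?div1r ?mul0r.
have -> : D = \sum_(v | v != w) (g w v : nat)%:R.
  by rewrite /D natr_deg_sum (bigD1 w) //= girr add0r.
have -> : (n.-1)%:R = \sum_(v | v != w) 1 :> R by rewrite sumr_const cardC1 card_ord.
rewrite -!big_split /=; apply: ler_sum => u _.
by rewrite [leRHS]addrC; apply: one_add_le_sqrt_add.
Qed.

Lemma sqrt_lt_randic : (maxdeg g < n.-1)%N -> Num.sqrt (n.-1)%:R < randic R g.
Proof.
move=> lt_Dn.
have [w Dw] : exists w, deg g w = maxdeg g.
  have n_gt0 : (0 < #|'I_n|)%N by rewrite card_ord; lia.
  by have [w Dw] := @bigop.eq_bigmax _ (deg g) n_gt0; exists w.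
have := randic_lower_bound Dw.
set x := Num.sqrt (n.-1)%:R : R; set y := Num.sqrt (maxdeg g)%:R : R.
have y_gt0 : 0 < y by rewrite sqrtr_gt0 ltr0n -Dw.
have lt_yx : y < x by rewrite ltr_sqrt ?ltr0n ?ltr_nat //; lia.
have <- : x ^+ 2 = (n.-1)%:R by rewrite sqr_sqrtr ?ler0n.
have <- : y ^+ 2 = (maxdeg g)%:R by rewrite sqr_sqrtr ?ler0n.
have : 0 < (x - y) ^+ 2 by rewrite exprn_gt0 // subr_gt0.
rewrite -(ltr_pM2r y_gt0); nra.
Qed.

End Randic.

Theorem lemma3p5 (R : rcfType) (n : nat) (g : rel 'I_n) (q : R) :
  simple_graph g -> gconnected g -> (13 <= n)%N ->
  [\/ (n <= 2 * maxdeg g /\ maxdeg g <= n - 4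
         /\ exists k, (1 <= k <= 10)%N /\ nedges g = (n + k)%N),
      (maxdeg g = n - 3 /\ exists k, (1 <= k <= 7)%N /\ nedges g = (n + k)%N)
    | (maxdeg g = n - 2 /\ exists k, (1 <= k <= 4)%N /\ nedges g = (n + k)%N)]%N ->
  is_q g q ->
  q / randic R g < n%:R / Num.sqrt (n.-1)%:R.
Proof.
move=> [gsym girr] gconn n13 hyp [q_eig _].
have deg_gt0 : forall u, (0 < deg g u)%N by apply: gconnected_deg_gt0 => //; lia.
have [le_Dn edge_bound] := lemma3p5_edge_bound n13 hyp.
have q_le_n := eigenvalue_signless_laplacian_le_order gsym girr deg_gt0 edge_bound q_eig.
have lt_sqrt_randic : Num.sqrt (n.-1)%:R < randic R g.
  by apply: (@sqrt_lt_randic R _ _ girr deg_gt0); lia.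
have sqrt_gt0 : 0 < Num.sqrt (n.-1)%:R :> R by rewrite sqrtr_gt0 ltr0n; lia.
have randic_gt0 := lt_trans sqrt_gt0 lt_sqrt_randic.
apply: (le_lt_trans (_ : _ <= n%:R / randic R g)); first by rewrite ler_pM2r ?invr_gt0.
by rewrite ltr_pM2l ?ltr0n ?ltf_pV2 ?posrE //; lia.
Qed.
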